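(* Let $\Delta$ be a $K$-dissection diagram on a compact surface $S$, and let $\alpha,\beta$ be two intersecting closed curves on $S$ (transverse to $\Delta$). Let $\gamma$ be the commutator $[\alpha,\beta]$ based at an intersection point of $\alpha$ and $\beta$. Then $\mathrm{effcont}(\gamma)\subseteq[\mathrm{cont}(\alpha),\mathrm{cont}(\beta)]$.
   Context: A $K$-dissection diagram on $(S,\partial S)$: finite collection of essential simple closed curves and properly embedded essential arcs, in minimal position, transversely oriented and labeled by vertices of $K$, curves with equal labels disjoint, intersecting only if labels adjacent. For a loop $\gamma$ and a point $*$ on it, $\phi_*(\gamma)\in A(K)$ is the product of labels of curves/arcs crossed along $\gamma$ from $*$ (exponents $\pm1$ by transverse orientation). $\mathrm{cont}(\gamma)$ is the set of labels crossed by $\gamma$; $\mathrm{rcont}_*(\gamma)$ is the smallest vertex set $V$ with $\phi_*(\gamma)\in A(V)$. Vertex sets $P,Q$ are adjacent if for all $p\in P,q\in Q$, $p=q$ or $p,q$ adjacent. $\mathrm{effcont}(\gamma)$ is the smallest subset $Z\subseteq\mathrm{cont}(\gamma)$ such that $Z\supseteq\mathrm{rcont}_*(\gamma)$ for every point $*\in\gamma$ and $\mathrm{cont}(\gamma)\setminus Z$ is adjacent to $Z$. For vertex sets $U,V$: write $U$ as the join of its anti-components $U_i$ (vertex sets of components of the complement of the induced subgraph on $U$) and likewise $V$; $U''$ is the union of those $U_i$ not adjacent to $V$, $V''$ the union of those $V_j$ not adjacent to $U$, and $[U,V]=U''\cup V''$. *)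

(* Combinatorial model of crossing words of loops w.r.t. a
   K-dissection diagram, and the right-angled Artin group A(K). *)
From mathcomp Require Import all_boot.
From mathcomp Require Import boolp.
From Stdlib Require Import Relations.
Set Implicit Arguments. Unset Strict Implicit. Unset Printing Implicit Defensive.

Section Dissection.
Variables (V : finType) (adj : rel V).

(* A letter: (label v, exponent) ; true = +1, false = -1. *)
Definition letter := (V * bool)%type.
Definition word := seq letter.

Definition linv (x : letter) : letter := (x.1, ~~ x.2).
Definition winv (w : word) : word := rev (map linv w).

Inductive raag_step : word -> word -> Prop :=
| raag_cancel u v x : raag_step (u ++ [:: x; linv x] ++ v) (u ++ v)
| raag_comm u v a b : adj a.1 b.1 -> raag_step (u ++ [:: a; b] ++ v) (u ++ [:: b; a] ++ v).

Definition raag_eq : word -> word -> Prop := clos_refl_sym_trans word raag_step.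

Definition inA (w : word) (W : {set V}) : Prop :=
  exists w', raag_eq w w' /\ all (fun x : letter => x.1 \in W) w'.

Definition cont (w : word) : {set V} := [set v | has (fun x : letter => x.1 == v) w].

Definition rcont (w : word) : {set V} :=
  \bigcap_(W : {set V} | `[< inA w W >]) W.

Definition adjacent (P Q : {set V}) : bool :=
  [forall p in P, forall q in Q, (p == q) || adj p q].

(* effective content of a loop with cyclic crossing word g: points * on the
   loop correspond to rotations of g *)
Definition effcont_ok (g : word) (Z : {set V}) : bool :=
  [&& Z \subset cont g,
      [forall k : 'I_(size g).+1, rcont (rot k g) \subset Z] &
      adjacent (cont g :\: Z) Z].

Definition effcont (g : word) : {set V} :=
  \bigcap_(Z : {set V} | effcont_ok g Z) Z.

Definition nadj_in (U : {set V}) : rel V :=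
  fun u u' => [&& u \in U, u' \in U, u != u' & ~~ adj u u'].

Definition anticomp (U : {set V}) (u : V) : {set V} :=
  [set u' in U | connect (nadj_in U) u u'].

Definition nonadj_part (U W : {set V}) : {set V} :=
  [set u in U | ~~ adjacent (anticomp U u) W].

Definition bracket (U W : {set V}) : {set V} :=
  nonadj_part U W :|: nonadj_part W U.

End Dissection.

From mathcomp Require Import all_boot.
From mathcomp Require Import boolp.
Set Implicit Arguments. Unset Strict Implicit. Unset Printing Implicit Defensive.

(* Let B := [cont wa, cont wb]. Every letter of the commutator word g whose
   label lies outside B commutes in A(K) with every letter labelled in B, and
   the letters of wa outside B commute with all letters of wb.  Hence, from any
   base point, g equals its B-part times its non-B part, and the non-B part is
   the commutator of two commuting words, i.e. trivial.  So every rotation of g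
   lies in A(B), and B itself satisfies the conditions defining effcont g. *)

Section RaagEq.
Variables (V : finType) (adj : rel V).
Hypothesis adj_sym : symmetric adj.

Local Notation req := (raag_eq adj).

Definition eq_or_adj (p q : V) := (p == q) || adj p q.

Lemma raag_step_cat x y u u' :
  raag_step adj u u' -> raag_step adj (x ++ u ++ y) (x ++ u' ++ y).
Proof.
case=> [a b c|a b c d cd].
- rewrite !catA -(catA _ _ b) -!(catA (x ++ a)); exact: raag_cancel.
- rewrite !catA -!(catA (x ++ a)); exact: raag_comm.
Qed.

Lemma req_refl u : req u u. Proof. exact: Relation_Operators.rst_refl. Qed.
Lemma req_sym u v : req u v -> req v u. Proof. exact: Relation_Operators.rst_sym. Qed.
Lemma req_trans u v w : req u v -> req v w -> req u w.
Proof. exact: Relation_Operators.rst_trans. Qed.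

Lemma req_cat x y u u' : req u u' -> req (x ++ u ++ y) (x ++ u' ++ y).
Proof.
elim=> [a b /(raag_step_cat x y) ab|a|a b _ IH|a b c _ IH1 _ IH2].
- exact: Relation_Operators.rst_step.
- exact: req_refl.
- exact: req_sym.
- exact: req_trans IH1 IH2.
Qed.

Lemma req_catl w u u' : req u u' -> req (w ++ u) (w ++ u').
Proof. by move/(req_cat w [::]); rewrite !cats0. Qed.

Lemma req_catr w u u' : req u u' -> req (u ++ w) (u' ++ w).
Proof. exact: req_cat [::] w u u'. Qed.

Lemma req_cancel x : req [:: x; linv x] [::].
Proof. exact/Relation_Operators.rst_step/(raag_cancel adj [::] [::]). Qed.

Lemma req_swap x y : eq_or_adj x.1 y.1 -> req [:: x; y] [:: y; x].
Proof.
case/orP=> [|xy]; last exact/Relation_Operators.rst_step/(raag_comm [::] [::]).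
case: x y => [a [|]] [b [|]] /= /eqP <-; try exact: req_refl.
- exact: req_trans (req_cancel (a, true)) (req_sym (req_cancel (a, false))).
- exact: req_trans (req_cancel (a, false)) (req_sym (req_cancel (a, true))).
Qed.

Lemma req_cons_rcons x v :
  {in v, forall y, eq_or_adj x.1 y.1} -> req (x :: v) (rcons v x).
Proof.
elim: v => [|y v IH] xv /=; first exact: req_refl.
apply: (@req_trans _ (y :: x :: v)).
  exact: (req_catr v (req_swap (xv y (mem_head _ _)))).
by apply: (req_catl [:: y]); apply: IH => z zv; apply: xv; rewrite inE zv orbT.
Qed.

Lemma req_catC u v :
  {in u & v, forall x y, eq_or_adj x.1 y.1} -> req (u ++ v) (v ++ u).
Proof.
elim: u => [|x u IH] uv /=; first by rewrite cats0; exact: req_refl.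
apply: (@req_trans _ (x :: v ++ u)).
  by apply: (req_catl [:: x]); apply: IH => a b au; apply: uv; rewrite inE au orbT.
rewrite -cat_rcons -cat_cons; apply: req_catr.
by apply: req_cons_rcons => y; apply: uv (mem_head _ _).
Qed.

Lemma req_cat_winv w : req (w ++ winv w) [::].
Proof.
elim: w => [|x w IH]; first exact: req_refl.
have -> : (x :: w) ++ winv (x :: w) = [:: x] ++ (w ++ winv w) ++ [:: linv x].
  by rewrite /winv /= rev_cons -cats1 !catA.
apply: req_trans (req_cat _ _ IH) _; exact: req_cancel.
Qed.

Lemma req_commutator u v :
  {in u & v, forall x y, eq_or_adj x.1 y.1} -> req (u ++ v ++ winv u ++ winv v) [::].
Proof.
move=> uv; rewrite catA; apply: req_trans (req_catr _ (req_catC uv)) _.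
rewrite -catA (catA u).
by apply: req_trans (req_cat v (winv v) (req_cat_winv u)) _; apply: req_cat_winv.
Qed.

Lemma req_catC_nil p s : req (p ++ s) [::] -> req (s ++ p) [::].
Proof.
move=> ps0; apply: (@req_trans _ ((s ++ p) ++ (s ++ winv s))).
  by move: (req_catl (s ++ p) (req_cat_winv s)); rewrite cats0 => /req_sym.
rewrite -catA (catA p).
by apply: req_trans (req_cat s (winv s) ps0) _; apply: req_cat_winv.
Qed.

Lemma req_filter (P : pred (letter V)) w :
  {in w &, forall x y, P x -> ~~ P y -> eq_or_adj x.1 y.1} ->
  req w (filter P w ++ filter (predC P) w).
Proof.
elim: w => [|x w IH] Pw /=; first exact: req_refl.
have {}IH : req w (filter P w ++ filter (predC P) w).
  by apply: IH => a b aw bw; apply: Pw; rewrite inE ?aw ?bw orbT.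
case: ifP => Px /=; first exact: req_catl [:: x] _ _ IH.
apply: req_trans (req_catl [:: x] IH) _.
rewrite cat1s -cat_rcons -cat_cons; apply: req_catr; apply: req_cons_rcons => y.
rewrite mem_filter => /andP[Py yw].
rewrite /eq_or_adj eq_sym adj_sym; by apply: (Pw y x); rewrite ?inE ?yw ?eqxx ?orbT ?Px.
Qed.

Lemma inA_filter_nil (W : {set V}) w :
  {in w &, forall x y, x.1 \in W -> y.1 \notin W -> eq_or_adj x.1 y.1} ->
  req [seq x <- w | x.1 \notin W] [::] -> inA adj w W.
Proof.
move=> wW out0; exists [seq x <- w | x.1 \in W]; split; last exact: filter_all.
apply: req_trans (req_filter (P := fun x => x.1 \in W) wW) _.
by move: (req_catl [seq x <- w | x.1 \in W] out0); rewrite cats0.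
Qed.

Lemma rcont_sub w (W : {set V}) : inA adj w W -> rcont adj w \subset W.
Proof. by move=> wW; apply: bigcap_inf; apply/asboolP. Qed.

End RaagEq.

Section Content.
Variables (V : finType) (adj : rel V).

Lemma cont_cat (u v : word V) : cont (u ++ v) = cont u :|: cont v.
Proof. by apply/setP => a; rewrite !inE has_cat. Qed.

Lemma cont_winv (w : word V) : cont (winv w) = cont w.
Proof. by apply/setP => a; rewrite !inE /winv has_rev has_map; apply: eq_has. Qed.

Lemma mem_cont (x : letter V) w : x \in w -> x.1 \in cont w.
Proof. by move=> xw; rewrite inE; apply/hasP; exists x. Qed.

Lemma filter_winv (P : pred V) (w : word V) :
  [seq x <- winv w | P x.1] = winv [seq x <- w | P x.1].
Proof. by rewrite /winv filter_rev filter_map. Qed.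

Lemma adjacentP (P Q : {set V}) p q :
  adjacent adj P Q -> p \in P -> q \in Q -> eq_or_adj adj p q.
Proof. by move=> /forallP/(_ p)/implyP PQ /PQ/forallP/(_ q)/implyP. Qed.

Lemma adjacentS (P P' Q : {set V}) :
  P \subset P' -> adjacent adj P' Q -> adjacent adj P Q.
Proof.
move=> /subsetP PP' P'Q; apply/forallP => p; apply/implyP => pP.
by apply/forallP => q; apply/implyP; apply: adjacentP P'Q (PP' _ pP).
Qed.

Lemma mem_anticomp (U : {set V}) u : u \in U -> u \in anticomp adj U u.
Proof. by rewrite inE connect0 andbT. Qed.

Lemma notin_nonadj_part (U W : {set V}) x y :
  x \in U -> x \notin nonadj_part adj U W -> y \in W -> eq_or_adj adj x y.
Proof.
by move=> xU; rewrite inE xU negbK => /adjacentP; apply; apply: mem_anticomp.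
Qed.

(* Non-adjacent vertices of U lie in the same anti-component. *)
Lemma nonadj_part_adj (U W : {set V}) x z :
  z \in nonadj_part adj U W -> x \in U -> x \notin nonadj_part adj U W ->
  eq_or_adj adj x z.
Proof.
rewrite !inE => /andP[zU z_nadj] xU; rewrite xU negbK /= => x_adj.
apply: contraR z_nadj; rewrite negb_or => /andP[xz nxz].
apply: adjacentS x_adj; apply/subsetP => y; rewrite !inE => /andP[-> zy] /=.
by apply: connect_trans zy; apply: connect1; rewrite /nadj_in xU zU xz.
Qed.

Lemma bracket_sub (U W : {set V}) : bracket adj U W \subset U :|: W.
Proof. by apply/subsetP => a; rewrite !inE => /orP[]/andP[-> _]; rewrite ?orbT. Qed.

Lemma nonadj_part_bracket_adj (U W : {set V}) x z :
  z \in nonadj_part adj U W -> x \in U :|: W -> x \notin bracket adj U W ->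
  eq_or_adj adj x z.
Proof.
move=> zUW xUW; rewrite /bracket inE negb_or => /andP[xnUW xnWU].
case/setUP: xUW => [xU|xW]; first exact: nonadj_part_adj zUW xU xnUW.
by apply: notin_nonadj_part xW xnWU _; move: zUW; rewrite inE => /andP[].
Qed.

Lemma bracket_adj (U W : {set V}) x z :
  x \in U :|: W -> x \notin bracket adj U W -> z \in bracket adj U W ->
  eq_or_adj adj x z.
Proof.
move=> xUW xB; case/setUP=> zB; first exact: nonadj_part_bracket_adj xUW xB.
apply: nonadj_part_bracket_adj zB _ _; first by rewrite setUC.
by rewrite /bracket setUC.
Qed.

End Content.

Lemma effcont_sub (V : finType) (adj : rel V) g (Z : {set V}) :
  Z \subset cont g -> (forall k, rcont adj (rot k g) \subset Z) ->
  (forall p q, p \in cont g -> p \notin Z -> q \in Z -> eq_or_adj adj p q) ->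
  effcont adj g \subset Z.
Proof.
move=> Zg rotZ gZ; apply: bigcap_inf; apply/and3P; split=> //.
  by apply/forallP => k; apply: rotZ.
apply/forallP => p; apply/implyP; rewrite inE => /andP[pZ pg].
by apply/forallP => q; apply/implyP; apply: gZ.
Qed.

Theorem lemma6p12 (V : finType) (adj : rel V)
    (adj_sym : symmetric adj) (adj_irr : irreflexive adj)
    (wa wb : word V) :
  effcont adj (wa ++ wb ++ winv wa ++ winv wb)
    \subset bracket adj (cont wa) (cont wb).
Proof.
set g := _ ++ _; set B := bracket adj _ _.
have cont_g : cont g = cont wa :|: cont wb.
  by rewrite !cont_cat !cont_winv setUA setUid.
have gB p q : p \in cont g -> p \notin B -> q \in B -> eq_or_adj adj p q.
  by rewrite cont_g; apply: bracket_adj.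
have out_wa_wb : {in [seq x <- wa | x.1 \notin B] & [seq y <- wb | y.1 \notin B],
                  forall x y, eq_or_adj adj x.1 y.1}.
  move=> x y; rewrite !mem_filter => /andP[xB /mem_cont xa] /andP[_ /mem_cont yb].
  move: xB; rewrite /B /bracket inE negb_or => /andP[xA _].
  exact: notin_nonadj_part xa xA yb.
have out_g0 : raag_eq adj [seq x <- g | x.1 \notin B] [::].
  by rewrite !filter_cat !(filter_winv (fun v => v \notin B)); apply: req_commutator.
apply: effcont_sub (gB) => [|k]; first by rewrite cont_g bracket_sub.
apply/rcont_sub/(inA_filter_nil adj_sym); last first.
  by rewrite /rot filter_cat; apply: req_catC_nil; rewrite -filter_cat cat_take_drop.
move=> x y; rewrite !mem_rot => xg yg xB yB.
by rewrite /eq_or_adj eq_sym adj_sym; apply: gB (mem_cont yg) yB xB.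
Qed.
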